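(* Let $q$ be a prime power and let $\mathbf{G}\in\mathbb{F}_q^{k\times n}$ be a generator matrix of a linear $[n,k]_q$ code. Consider a coded storage system with files $f_1,\dots,f_k$ in which, for each $i\in[k]$, file $f_i$ has a given list $\mathcal{R}_i=(R_{i,1},\dots,R_{i,t_i})$ of $t_i\ge1$ recovery sets, each of size $1$ or $2$, and all servers have service rate $1$. Let $G$ be the graph representation of the code. Then $m(G)\le\lambda^\star(\mathbf{G})=m_f(G)\le v(G)$.
   Context: Let $\mathbf{g}_1,\dots,\mathbf{g}_n$ be the columns of $\mathbf{G}$ and $\mathbf{e}_i$ the $i$-th unit vector. A set $R\subseteq[n]$ is a recovery set for file $f_i$ if there exist nonzero $\alpha_j\in\mathbb{F}_q$ ($j\in R$) with $\sum_{j\in R}\alpha_j\mathbf{g}_j=\mathbf{e}_i$. The service rate region $\mathcal{S}(\mathbf{G})$ is the set of $\boldsymbol{\lambda}\in\mathbb{R}^k$ for which there exist real $\lambda_{i,j}\ge0$ with $\sum_{j=1}^{t_i}\lambda_{i,j}=\lambda_i$ for all $i$ and $\sum_{i=1}^k\sum_{j\in[t_i]:\,l\in R_{i,j}}\lambda_{i,j}\le1$ for every server $l\in[n]$. The service capacity is $\lambda^\star(\mathbf{G})=\max\{\sum_{i=1}^k\lambda_i:\boldsymbol{\lambda}\in\mathcal{S}(\mathbf{G})\}$. The graph representation $G$ is the (multi)graph with vertex set $[n]$ plus one new dummy vertex $d_{i,j}$ for each recovery set $R_{i,j}$ of size 1, and edges indexed by $(i,j)$: if $R_{i,j}=\{a,b\}$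 the edge joins $a$ and $b$; if $R_{i,j}=\{r\}$ it joins $r$ and $d_{i,j}$. $m(G)$ is the maximum number of pairwise non-adjacent edges (matching number); $m_f(G)$ is the maximum of $\sum_e x_e$ over assignments $x_e\in[0,1]$ with the sum over edges incident to each vertex at most 1 (fractional matching number); $v(G)$ is the minimum size of a vertex set meeting every edge (vertex cover number). *)

From HB Require Import structures.
From mathcomp Require Import all_boot all_order all_algebra.
From mathcomp Require Import reals.
Set Implicit Arguments. Unset Strict Implicit. Unset Printing Implicit Defensive.
Import Order.TTheory GRing.Theory Num.Theory.
Local Open Scope ring_scope.

Definition recovery_set (F : fieldType) (k n : nat) (G : 'M[F]_(k, n))
  (i : 'I_k) (R : {set 'I_n}) : Prop :=
  exists alpha : 'I_n -> F,
    (forall j, j \in R -> alpha j != 0) /\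
    \sum_(j in R) alpha j *: col j G = delta_mx i (0 : 'I_1).

(* Edge (= recovery set) index type: pairs (i, j) with j < t_i. *)
Definition edge_idx (k : nat) (t : 'I_k -> nat) : finType :=
  {i : 'I_k & 'I_(t i)}.

Definition RS (k n : nat) (t : 'I_k -> nat)
  (Rs : forall i : 'I_k, 'I_(t i) -> {set 'I_n}) (e : edge_idx t) : {set 'I_n} :=
  Rs (tag e) (tagged e).

Definition dummy_idx (k n : nat) (t : 'I_k -> nat)
  (Rs : forall i : 'I_k, 'I_(t i) -> {set 'I_n}) : finType :=
  {e : edge_idx t | #|RS Rs e| == 1%N}.

Definition vertex (k n : nat) (t : 'I_k -> nat)
  (Rs : forall i : 'I_k, 'I_(t i) -> {set 'I_n}) : finType :=
  ('I_n + dummy_idx Rs)%type.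

(* Endpoints of edge (i,j): {a,b} if R_{i,j} = {a,b}; {r, d_{i,j}} if R_{i,j} = {r}. *)
Definition ends (k n : nat) (t : 'I_k -> nat)
  (Rs : forall i : 'I_k, 'I_(t i) -> {set 'I_n}) (e : edge_idx t)
  : {set vertex Rs} :=
  ((@inl 'I_n (dummy_idx Rs)) @: RS Rs e) :|:
  (match @insub _ (fun e => #|RS Rs e| == 1%N) (dummy_idx Rs) e with
   | Some d => [set inr d]
   | None => set0
   end).

Definition is_matching (k n : nat) (t : 'I_k -> nat)
  (Rs : forall i : 'I_k, 'I_(t i) -> {set 'I_n}) (M : {set edge_idx t}) : bool :=
  [forall e1 in M, forall e2 in M, (e1 != e2) ==> [disjoint ends Rs e1 & ends Rs e2]].

Definition matching_number (k n : nat) (t : 'I_k -> nat)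
  (Rs : forall i : 'I_k, 'I_(t i) -> {set 'I_n}) : nat :=
  \max_(M : {set edge_idx t} | is_matching Rs M) #|M|.

Definition is_vertex_cover (k n : nat) (t : 'I_k -> nat)
  (Rs : forall i : 'I_k, 'I_(t i) -> {set 'I_n}) (C : {set vertex Rs}) : bool :=
  [forall e : edge_idx t, ~~ [disjoint C & ends Rs e]].
Arguments is_vertex_cover {k n t} Rs C.

(* v(G): vertex cover number (minimum size; the full vertex set is a cover
   whenever every edge has an endpoint, so #|V| is a harmless initial value). *)
Definition vertex_cover_number (k n : nat) (t : 'I_k -> nat)
  (Rs : forall i : 'I_k, 'I_(t i) -> {set 'I_n}) : nat :=
  \big[minn/#|vertex Rs|]_(C : {set vertex Rs} | is_vertex_cover Rs C) #|C|.

Definition is_max (R : realType) (S : R -> Prop) (x : R) : Prop :=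
  S x /\ forall y, S y -> y <= x.

Definition frac_matching_values (R : realType) (k n : nat) (t : 'I_k -> nat)
  (Rs : forall i : 'I_k, 'I_(t i) -> {set 'I_n}) (s : R) : Prop :=
  exists x : edge_idx t -> R,
    (forall e, 0 <= x e <= 1) /\
    (forall v : vertex Rs, \sum_(e | v \in ends Rs e) x e <= 1) /\
    s = \sum_e x e.

Definition service_region (R : realType) (k n : nat) (t : 'I_k -> nat)
  (Rs : forall i : 'I_k, 'I_(t i) -> {set 'I_n}) (lam : 'I_k -> R) : Prop :=
  exists lamij : edge_idx t -> R,
    (forall e, 0 <= lamij e) /\
    (forall i : 'I_k, \sum_(j : 'I_(t i)) lamij (Tagged (fun i => 'I_(t i)) j) = lam i) /\
    (forall l : 'I_n, \sum_(e | l \in RS Rs e) lamij e <= 1).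

Definition service_sums (R : realType) (k n : nat) (t : 'I_k -> nat)
  (Rs : forall i : 'I_k, 'I_(t i) -> {set 'I_n}) (s : R) : Prop :=
  exists lam : 'I_k -> R, service_region Rs lam /\ s = \sum_i lam i.

(** The service rate LP of a code whose recovery sets have size at most two
    is exactly the fractional matching LP of its graph representation: the
    load [lambda_(i,j)] of a recovery set is the weight of its edge, a server
    constraint is the constraint at the corresponding vertex, and the
    constraint at a dummy vertex, [x_e <= 1], is implied by the constraint at
    the other endpoint of [e]. Both optima exist by compactness of the
    polytope. An integral matching is a fractional one, and summing the
    vertex constraints over a vertex cover bounds every fractional matching. *)
From HB Require Import structures.
From mathcomp Require Import all_boot all_order all_algebra.
From mathcomp Require Import reals boolp classical_sets topology normedtype derive.
Import Order.TTheory GRing.Theory Num.Theory.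
Import numFieldNormedType.Exports.
Local Open Scope ring_scope.

Definition frac_packing {R : realType} {E V : finType} (Q : V -> pred E)
  (x : E -> R) : Prop :=
  (forall e, 0 <= x e <= 1) /\ (forall v, \sum_(e | Q v e) x e <= 1).

Section FracPacking.
Variables (R : realType) (E V : finType) (Q : V -> pred E).

Local Open Scope classical_set_scope.

Lemma continuous_sum_ptws (P : pred E) :
  continuous (fun x : {ptws E -> R} => \sum_(e | P e) x e).
Proof.
apply: continuous_big => [|e _]; first exact: add_continuous.
exact: (@proj_continuous E (fun _ => R) e).
Qed.

Lemma frac_packing_closed :
  closed [set x : {ptws E -> R} | frac_packing Q x].
Proof.
have -> : [set x : {ptws E -> R} | frac_packing Q x] =
    \bigcap_(e in setT) ((fun x : {ptws E -> R} => x e) @^-1` `[0, 1]) `&`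
    \bigcap_(v in setT) ((fun x : {ptws E -> R} => \sum_(e | Q v e) x e)
                           @^-1` [set r | r <= 1]).
  apply/seteqP; split => x /=.
    by move=> [x01 xQ]; split => [e _|v _]; rewrite /= ?in_itv; [exact: x01|].
  by move=> [x01 xQ]; split => [e|v]; [move: (x01 e I); rewrite /= in_itv|exact: xQ].
apply: closedI; [apply: closed_bigI => e _|apply: closed_bigI => v _];
  apply: preimage_closed.
- by move=> x _; exact: (@proj_continuous E (fun _ => R) e).
- exact: interval_closed.
- by move=> x _; exact: continuous_sum_ptws.
- exact: closed_le.
Qed.

Lemma frac_packing_compact :
  compact [set x : {ptws E -> R} | frac_packing Q x].
Proof.
apply: (subclosed_compact frac_packing_closed
          (tychonoff (fun _ => @segment_compact R 0 1))).
by move=> x [x01 _] e; rewrite /= in_itv; exact: x01.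
Qed.

Lemma frac_packing0 : frac_packing Q (fun=> 0 : R).
Proof. by split=> [e|v]; [rewrite lexx ler01|rewrite big1]. Qed.

Lemma frac_packing_sum_max :
  exists2 c : E -> R, frac_packing Q c &
    forall x, frac_packing Q x -> \sum_e x e <= \sum_e c e.
Proof.
have [||c c_in c_max] := @compact_EVT_max _ _ (fun x : {ptws E -> R} => \sum_e x e)
  _ _ frac_packing_compact.
- by exists (fun=> 0); exact: frac_packing0.
- by apply: continuous_subspaceT; exact: continuous_sum_ptws.
exists c; first by rewrite inE in c_in.
by move=> x Px; apply: c_max; rewrite inE.
Qed.

End FracPacking.

Lemma sum_edge_idx (R : realType) (k : nat) (t : 'I_k -> nat)
  (f : edge_idx t -> R) :
  \sum_i \sum_(j : 'I_(t i)) f (Tagged (fun i => 'I_(t i)) j) = \sum_e f e.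
Proof. by rewrite (sig_big_dep xpredT (fun i _ => true)); apply: eq_big => -[]. Qed.

Section GraphRepresentation.
Variables (R : realType) (k n : nat) (t : 'I_k -> nat).
Variable Rs : forall i : 'I_k, 'I_(t i) -> {set 'I_n}.

Let incident (v : vertex Rs) : pred (edge_idx t) := fun e => v \in ends Rs e.

Lemma in_ends_inl l e : (inl l \in ends Rs e) = (l \in RS Rs e).
Proof.
rewrite /ends inE mem_imset; last by move=> a b [].
by case: insub => [d|]; rewrite inE orbF.
Qed.

Lemma in_ends_inr (d : dummy_idx Rs) e : (inr d \in ends Rs e) = (val d == e).
Proof.
rewrite /ends inE.
have -> : (inr d \in inl @: RS Rs e) = false by apply/negbTE/imsetP => -[].
case: insubP => [u _ <-|not_dummy] /=.
  by rewrite inE; apply/eqP/eqP => [[->]|/val_inj ->].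
rewrite inE; apply/esym/negbTE; apply: contra not_dummy => /eqP <-.
exact: valP d.
Qed.

Lemma frac_matching_valuesP (s : R) :
  frac_matching_values Rs s <->
  exists2 x, frac_packing incident x & s = \sum_e x e.
Proof.
split; first by move=> [x [x01 [xv ->]]]; exists x.
by move=> [x [x01 xv] ->]; exists x.
Qed.

Lemma frac_matching_max_exists :
  exists mf : R, is_max (frac_matching_values Rs) mf.
Proof.
have [c c_packing c_max] := @frac_packing_sum_max R _ _ incident.
exists (\sum_e c e); split; first by apply/frac_matching_valuesP; exists c.
by move=> _ /frac_matching_valuesP [x x_packing ->]; exact: c_max.
Qed.

Lemma matching_frac_matching M :
  is_matching Rs M -> frac_matching_values Rs (#|M|%:R : R).
Proof.
move=> /forall_inP M_match; apply/frac_matching_valuesP.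
exists (fun e => if e \in M then 1 else 0); last by rewrite -big_mkcond /= sumr_const.
split=> [e|v]; first by case: (e \in M); rewrite ?lexx ?ler01.
rewrite -big_mkcondr /=.
case: (pickP [pred e | incident v e && (e \in M)]) => [e0 /andP[v_e0 e0M]|no_edge].
  rewrite (bigD1 e0) ?v_e0 //= big1 ?addr0 // => e /andP[/andP[v_e eM] ne].
  have /forall_inP/(_ e eM)/implyP := M_match e0 e0M.
  rewrite eq_sym ne => /(_ isT) /disjointFr /(_ v_e0).
  by rewrite -/(incident v e) v_e.
by rewrite big_pred0 ?ler01.
Qed.

Lemma matching_number_le (mf : R) :
  is_max (frac_matching_values Rs) mf -> (matching_number Rs)%:R <= mf.
Proof.
move=> [_ mf_ge]; apply: (big_ind (fun m : nat => m%:R <= mf)).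
- apply: mf_ge; apply/frac_matching_valuesP.
  by exists (fun=> 0); [exact: frac_packing0|rewrite big1].
- by move=> a b a_le b_le; rewrite /maxn; case: ifP.
- by move=> M /matching_frac_matching; exact: mf_ge.
Qed.

Lemma frac_matching_le_cover (s : R) C :
  is_vertex_cover Rs C -> frac_matching_values Rs s -> s <= #|C|%:R.
Proof.
move=> /forallP C_cover /frac_matching_valuesP [x [x01 xv] ->].
have x_ge0 e : 0 <= x e by case/andP: (x01 e).
have le_cover_sum : \sum_e x e <= \sum_(v in C) \sum_(e | incident v e) x e.
  rewrite (exchange_big_dep xpredT) //=; apply: ler_sum => e _.
  have /pred0Pn[v /andP[vC v_e]] := C_cover e.
  rewrite (bigD1 v) /=; last exact/andP.
  by rewrite lerDl; exact: sumr_ge0.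
apply: le_trans le_cover_sum _.
by rewrite -sum1_card natr_sum; apply: ler_sum => v _; exact: xv.
Qed.

Hypothesis RS_gt0 : forall e : edge_idx t, (0 < #|RS Rs e|)%N.

Lemma service_sums_frac_matching :
  service_sums Rs = frac_matching_values Rs :> (R -> Prop).
Proof.
apply: funext => s; apply: propext; rewrite frac_matching_valuesP; split.
  move=> [lam [[x [x_ge0 [x_lam x_serv]]] ->]].
  (* an edge carries no more load than the server constraint at an endpoint *)
  have x_le1 e : x e <= 1.
    have /card_gt0P[l l_e] := RS_gt0 e.
    apply: le_trans (x_serv l); rewrite (bigD1 e) //= lerDl.
    exact: sumr_ge0.
  exists x; last by rewrite -sum_edge_idx; apply: eq_bigr => i _; rewrite x_lam.
  split=> [e|[l|d]]; first by rewrite x_ge0 x_le1.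
    by rewrite (eq_bigl _ _ (in_ends_inl l)); exact: x_serv.
  by rewrite (big_pred1 (val d)) // => e; rewrite /incident in_ends_inr eq_sym.
move=> [x [x01 xv] ->].
exists (fun i => \sum_(j : 'I_(t i)) x (Tagged (fun i => 'I_(t i)) j)).
split; last by rewrite sum_edge_idx.
exists x; split=> [e|]; first by case/andP: (x01 e).
split=> // l; rewrite -(eq_bigl _ _ (in_ends_inl l)); exact: xv.
Qed.

Lemma setT_vertex_cover : is_vertex_cover Rs [set: vertex Rs].
Proof.
apply/forallP => e; have /card_gt0P[l l_e] := RS_gt0 e.
by apply/pred0Pn; exists (inl l); rewrite /= inE in_ends_inl.
Qed.

Lemma frac_matching_le_vertex_cover_number (s : R) :
  frac_matching_values Rs s -> s <= (vertex_cover_number Rs)%:R.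
Proof.
move=> s_frac; apply: (big_ind (fun m : nat => s <= m%:R)).
- by rewrite -cardsT; exact: frac_matching_le_cover setT_vertex_cover s_frac.
- by move=> a b a_ge b_ge; rewrite /minn; case: ifP.
- by move=> C C_cover; exact: frac_matching_le_cover C_cover s_frac.
Qed.

End GraphRepresentation.

Theorem theorem2 (R : realType) (F : finFieldType) (k n : nat)
  (G : 'M[F]_(k, n)) (t : 'I_k -> nat)
  (Rs : forall i : 'I_k, 'I_(t i) -> {set 'I_n}) :
  \rank G = k ->
  (forall i, (1 <= t i)%N) ->
  (forall i (j : 'I_(t i)), #|Rs i j| = 1%N \/ #|Rs i j| = 2%N) ->
  (forall i (j : 'I_(t i)), recovery_set G i (Rs i j)) ->
  exists lam_star mf : R,
    is_max (service_sums Rs) lam_star /\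
    is_max (frac_matching_values Rs) mf /\
    (matching_number Rs)%:R <= lam_star /\
    lam_star = mf /\
    mf <= (vertex_cover_number Rs)%:R.
Proof.
move=> _ _ Rs_card _.
have RS_gt0 (e : edge_idx t) : (0 < #|RS Rs e|)%N.
  by case: e => i j; rewrite /RS /=; case: (Rs_card i j) => ->.
have [mf mf_max] := @frac_matching_max_exists R _ _ _ Rs.
exists mf, mf; rewrite service_sums_frac_matching //.
do 2!split=> //; split; first exact: matching_number_le.
by split=> //; exact: frac_matching_le_vertex_cover_number mf_max.1.
Qed.
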